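(* Let $0<d<\pi/2$, $\mathscr{D}_d=\{\zeta\in\mathbb{C}:|\Im\zeta|<d\}$, $\mathscr{D}_d^{-}=\{\zeta\in\mathscr{D}_d:\Re\zeta<0\}$, $\mathscr{D}_d^{+}=\{\zeta\in\mathscr{D}_d:\Re\zeta\ge0\}$. Assume $f$ is analytic on $\sinh(\mathscr{D}_d)$ and there are constants $K,\alpha,\beta>0$ with $|f(z)|\le K|1+z^2|^{-(\alpha+1)/2}$ for all $z\in\sinh(\mathscr{D}_d^-)$ and $|f(z)|\le K|1+z^2|^{-(\beta+1)/2}$ for all $z\in\sinh(\mathscr{D}_d^+)$. Let $\mu=\min\{\alpha,\beta\}$, $\nu=\max\{\alpha,\beta\}$. Then $F(\zeta)=f(\sinh\zeta)\cosh\zeta$ belongs to $\mathbf{L}^{\mathrm{SE}}_{L,R,\alpha,\beta}(\mathscr{D}_d)$ with $L=2^{\nu}K/(\cos d)^{(\nu-\mu)/2}$ and $R=2^{\nu}K$.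
   Context: For positive $L,R,\alpha,\beta$ and $0<d<\pi/2$, $\mathbf{L}^{\mathrm{SE}}_{L,R,\alpha,\beta}(\mathscr{D}_d)$ is the set of functions $F$ analytic on $\mathscr{D}_d$ such that for all $\zeta\in\mathscr{D}_d$, $|F(\zeta)|\le L\,|1+e^{-2\zeta}|^{-\alpha/2}|1+e^{2\zeta}|^{-\beta/2}$, and for all $x\in\mathbb{R}$, $|F(x)|\le R\,(1+e^{-2x})^{-\alpha/2}(1+e^{2x})^{-\beta/2}$. *)

From Stdlib Require Import Reals Lra.
From Coquelicot Require Import Coquelicot.
Open Scope R_scope.

Definition cexp (z : C) : C :=
  (exp (Re z) * cos (Im z), exp (Re z) * sin (Im z)).
Definition csinh (z : C) : C := ((cexp z - cexp (- z)) / 2)%C.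
Definition ccosh (z : C) : C := ((cexp z + cexp (- z)) / 2)%C.

Definition C_differentiable (f : C -> C) (z : C) : Prop :=
  @ex_derive C_AbsRing C_NormedModule f z.

Definition strip (d : R) (z : C) : Prop := Rabs (Im z) < d.
Definition strip_minus (d : R) (z : C) : Prop := strip d z /\ Re z < 0.
Definition strip_plus (d : R) (z : C) : Prop := strip d z /\ 0 <= Re z.

Definition LSE (L Rc alpha beta d : R) (F : C -> C) : Prop :=
  (forall zeta, strip d zeta -> C_differentiable F zeta) /\
  (forall zeta, strip d zeta ->
     Cmod (F zeta) <=
       L * Rpower (Cmod (1 + cexp (-2 * zeta))) (- alpha / 2)
         * Rpower (Cmod (1 + cexp (2 * zeta))) (- beta / 2)) /\
  (forall x : R,
     Cmod (F (RtoC x)) <=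
       Rc * Rpower (1 + exp (-2 * x)) (- alpha / 2)
          * Rpower (1 + exp (2 * x)) (- beta / 2)).

(* Since 1 + sinh^2 = cosh^2, the hypotheses give |F zeta| <= K |cosh zeta|^(-alpha) on
   the left half-strip and K |cosh zeta|^(-beta) on the right one, and
   4 cosh^2 zeta = (1 + e^(-2 zeta)) (1 + e^(2 zeta)).  On the strip both factors have
   modulus at least cos (Im zeta) >= cos d, and on the left half-strip the second one has
   modulus at most 2 (symmetrically on the right).  Trading the exponent of that factor
   between alpha and beta therefore costs at most 2^nu (cos d)^(-(nu - mu)/2); on the real
   axis cos (Im zeta) = 1 and the cosine factor disappears. *)

From Stdlib Require Import Reals Lra.
From Coquelicot Require Import Coquelicot.
Open Scope R_scope.

Lemma derivable_pt_lim_little_o (f : R -> R) (x0 l : R) :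
  derivable_pt_lim f x0 l ->
  forall eps, 0 < eps -> exists delta, 0 < delta /\
    forall h, Rabs h < delta -> Rabs (f (x0 + h) - f x0 - l * h) <= eps * Rabs h.
Proof.
  intros Hd eps Heps. destruct (Hd eps Heps) as [[delta Hdelta] Hlim].
  exists delta; split; [exact Hdelta|]. intros h Hh.
  destruct (Req_dec h 0) as [->|Hh0].
  { rewrite Rplus_0_r, Rabs_R0, Rmult_0_r, Rmult_0_r, Rminus_0_r, Rminus_diag, Rabs_R0.
    lra. }
  replace (f (x0 + h) - f x0 - l * h) with (((f (x0 + h) - f x0) / h - l) * h)
    by (field; exact Hh0).
  rewrite Rabs_mult. apply Rmult_le_compat_r; [apply Rabs_pos|].
  left; exact (Hlim h Hh0 Hh).
Qed.

Lemma exp_le_compat (x y : R) : x <= y -> exp x <= exp y.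
Proof. intros [Hlt|Heq]; [left; apply exp_increasing, Hlt | right; rewrite Heq; reflexivity]. Qed.

Lemma Cmod_le_Rabs_Re_Im (z : C) : Cmod z <= Rabs (Re z) + Rabs (Im z).
Proof.
  destruct z as [x y]; unfold Cmod; simpl.
  rewrite <- (sqrt_pow2 (Rabs x + Rabs y)) by (pose proof (Rabs_pos x); pose proof (Rabs_pos y); lra).
  apply sqrt_le_1_alt.
  pose proof (Rabs_pos x); pose proof (Rabs_pos y).
  pose proof (Rsqr_abs x); pose proof (Rsqr_abs y); unfold Rsqr in *. nra.
Qed.

Lemma cexp_add (z w : C) : cexp (z + w) = (cexp z * cexp w)%C.
Proof.
  destruct z as [a b], w as [c d]; unfold cexp, Cmult, Cplus; simpl.
  rewrite exp_plus, cos_plus, sin_plus. f_equal; ring.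
Qed.

Lemma cexp_R (x : R) : cexp (RtoC x) = RtoC (exp x).
Proof. unfold cexp, RtoC; simpl. rewrite cos_0, sin_0. f_equal; ring. Qed.

Lemma cexp_mul_cexp_opp (z : C) : (cexp z * cexp (- z))%C = 1.
Proof.
  rewrite <- cexp_add. replace (z + - z)%C with (RtoC 0) by ring.
  rewrite cexp_R, exp_0. reflexivity.
Qed.

Lemma Cmod_cexp (z : C) : Cmod (cexp z) = exp (Re z).
Proof.
  destruct z as [a b]; unfold cexp, Cmod; simpl.
  pose proof (sin2_cos2 b) as Hsc; unfold Rsqr in Hsc.
  match goal with |- sqrt ?X = _ =>
    replace X with (exp a ^ 2 * (sin b * sin b + cos b * cos b)) by ring end.
  rewrite Hsc, Rmult_1_r. apply sqrt_pow2. left; apply exp_pos.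
Qed.

Lemma Cmod_cexp_sub_1_sub_le (a b e : R) :
  0 <= e -> e <= 1 -> Rabs a <= 1 -> Rabs b <= e ->
  Rabs (exp a - 1 - a) <= e * Rabs a ->
  Rabs (cos b - 1) <= e * Rabs b ->
  Rabs (sin b - b) <= e * Rabs b ->
  Cmod (cexp (a, b) - 1 - (a, b)) <= 9 * e * Cmod (a, b).
Proof.
  intros He0 He1 Ha Hbe Hexp Hcos Hsin.
  pose proof (Rmax_Cmod (a, b)) as Hmax; simpl in Hmax.
  pose proof (Rmax_l (Rabs a) (Rabs b)); pose proof (Rmax_r (Rabs a) (Rabs b)).
  set (r := Cmod (a, b)) in *.
  pose proof (Rabs_pos a); pose proof (Rabs_pos b); pose proof (exp_pos a).
  assert (Hexp3 : exp a <= 3).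
  { apply Rle_trans with (exp 1); [|exact exp_le_3].
    apply exp_le_compat. pose proof (Rle_abs a); lra. }
  assert (Hre : Rabs (exp a * (cos b - 1) + (exp a - 1 - a)) <= 4 * e * r).
  { eapply Rle_trans; [apply Rabs_triang|].
    rewrite Rabs_mult, (Rabs_right (exp a)) by lra.
    assert (exp a * Rabs (cos b - 1) <= 3 * (e * Rabs b))
      by (apply Rmult_le_compat; try lra; apply Rabs_pos).
    nra. }
  assert (Hexp1 : Rabs (exp a - 1) <= 2 * Rabs a).
  { replace (exp a - 1) with ((exp a - 1 - a) + a) by ring.
    eapply Rle_trans; [apply Rabs_triang|]. nra. }
  assert (Hsinb : Rabs (sin b) <= 2 * Rabs b).
  { replace (sin b) with ((sin b - b) + b) by ring.
    eapply Rle_trans; [apply Rabs_triang|]. nra. }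
  assert (Him : Rabs ((exp a - 1) * sin b + (sin b - b)) <= 5 * e * r).
  { eapply Rle_trans; [apply Rabs_triang|]. rewrite Rabs_mult.
    assert (Rabs (exp a - 1) * Rabs (sin b) <= 2 * Rabs a * (2 * Rabs b))
      by (apply Rmult_le_compat; try apply Rabs_pos; lra).
    nra. }
  eapply Rle_trans; [apply Cmod_le_Rabs_Re_Im|].
  unfold cexp; simpl.
  match goal with |- Rabs ?X + Rabs ?Y <= _ =>
    replace X with (exp a * (cos b - 1) + (exp a - 1 - a)) by ring;
    replace Y with ((exp a - 1) * sin b + (sin b - b)) by ring end.
  lra.
Qed.

Lemma cexp_sub_1_sub_little_o (eps : R) : 0 < eps -> exists delta, 0 < delta /\
  forall h, Cmod h < delta -> Cmod (cexp h - 1 - h) <= eps * Cmod h.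
Proof.
  intros Heps.
  set (e := Rmin 1 (eps / 9)).
  assert (He : 0 < e) by (apply Rmin_glb_lt; lra).
  assert (He1 : e <= 1) by apply Rmin_l.
  assert (He9 : 9 * e <= eps) by (assert (e <= eps / 9) by apply Rmin_r; lra).
  clearbody e.
  destruct (derivable_pt_lim_little_o exp 0 1 derivable_pt_lim_exp_0 e He)
    as [d1 [Hd1 Hexp]].
  destruct (derivable_pt_lim_little_o cos 0 _ (derivable_pt_lim_cos 0) e He)
    as [d2 [Hd2 Hcos]].
  destruct (derivable_pt_lim_little_o sin 0 _ (derivable_pt_lim_sin 0) e He)
    as [d3 [Hd3 Hsin]].
  pose proof (Rmin_l (Rmin d1 d2) (Rmin d3 e)); pose proof (Rmin_r (Rmin d1 d2) (Rmin d3 e)).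
  pose proof (Rmin_l d1 d2); pose proof (Rmin_r d1 d2).
  pose proof (Rmin_l d3 e); pose proof (Rmin_r d3 e).
  exists (Rmin (Rmin d1 d2) (Rmin d3 e)); split; [repeat apply Rmin_glb_lt; lra|].
  intros [a b] Hh.
  pose proof (Rmax_Cmod (a, b)) as Hmax; simpl in Hmax.
  pose proof (Rmax_l (Rabs a) (Rabs b)); pose proof (Rmax_r (Rabs a) (Rabs b)).
  specialize (Hexp a ltac:(lra)). specialize (Hcos b ltac:(lra)).
  specialize (Hsin b ltac:(lra)).
  rewrite !Rplus_0_l, exp_0, Rmult_1_l in Hexp.
  rewrite !Rplus_0_l, cos_0, sin_0, Ropp_0, Rmult_0_l, Rminus_0_r in Hcos.
  rewrite !Rplus_0_l, sin_0, cos_0, Rmult_1_l, Rminus_0_r in Hsin.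
  eapply Rle_trans; [apply (Cmod_cexp_sub_1_sub_le a b e); try lra; assumption|].
  apply Rmult_le_compat_r; [apply Cmod_ge_0 | exact He9].
Qed.

Lemma is_derive_cexp (z : C) : is_derive cexp z (cexp z).
Proof.
  split; [apply is_linear_scal_l|].
  intros x Hx.
  apply (is_filter_lim_locally_unique (K := C_AbsRing)
           (V := AbsRing_NormedModule C_AbsRing)) in Hx; subst x.
  intros eps.
  assert (Hexp : 0 < exp (Re z)) by apply exp_pos.
  destruct (cexp_sub_1_sub_little_o (eps / exp (Re z))) as [delta [Hdelta Ho]].
  { apply Rdiv_lt_0_compat; [apply cond_pos|exact Hexp]. }
  exists (mkposreal delta Hdelta). intros y Hy.
  change (Cmod (minus y z) < delta) in Hy.
  set (h := minus y z) in *.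
  assert (Hyz : y = (z + h)%C).
  { assert (Hsub : forall a b : C, b = (a + (b - a))%C) by (intros; ring). apply Hsub. }
  change (Cmod (minus (minus (cexp y) (cexp z)) (scal h (cexp z))) <= eps * Cmod h).
  replace (minus (minus (cexp y) (cexp z)) (scal h (cexp z)))
    with (cexp z * (cexp h - 1 - h))%C
    by (rewrite Hyz, cexp_add;
        assert (Hfact : forall a b c : C, (a * (b - 1 - c) = a * b - a - c * a)%C)
          by (intros; ring);
        apply Hfact).
  rewrite Cmod_mult, Cmod_cexp.
  replace (eps * Cmod h) with (exp (Re z) * (eps / exp (Re z) * Cmod h)) by (field; lra).
  apply Rmult_le_compat_l; [lra|].
  apply Ho, Hy.
Qed.

(* Coquelicot's product rule is stated for [AbsRing_NormedModule C_AbsRing], whereas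
   [C_differentiable] uses [C_NormedModule]; the two structures have the same fields. *)
Lemma is_derive_AbsRing_of_C (f : C -> C) (z l : C) :
  @is_derive C_AbsRing C_NormedModule f z l ->
  @is_derive C_AbsRing (AbsRing_NormedModule C_AbsRing) f z l.
Proof. intros [[Hadd Hscal Hbound] Hdomin]. split; [constructor|]; assumption. Qed.

Lemma is_derive_C_of_AbsRing (f : C -> C) (z l : C) :
  @is_derive C_AbsRing (AbsRing_NormedModule C_AbsRing) f z l ->
  @is_derive C_AbsRing C_NormedModule f z l.
Proof. intros [[Hadd Hscal Hbound] Hdomin]. split; [constructor|]; assumption. Qed.

Lemma C_differentiable_mult (f g : C -> C) (z : C) :
  C_differentiable f z -> C_differentiable g z ->
  C_differentiable (fun x => f x * g x)%C z.
Proof.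
  intros [lf Hf] [lg Hg]. eexists.
  apply is_derive_C_of_AbsRing, (is_derive_mult (K := C_AbsRing) f g z lf lg);
    [apply is_derive_AbsRing_of_C, Hf | apply is_derive_AbsRing_of_C, Hg|].
  intros; apply Cmult_comm.
Qed.

Lemma C_differentiable_const (c z : C) : C_differentiable (fun _ => c) z.
Proof. eexists. apply is_derive_C_of_AbsRing, (is_derive_const (K := C_AbsRing)). Qed.

Lemma C_differentiable_comp (f g : C -> C) (z : C) :
  C_differentiable g z -> C_differentiable f (g z) ->
  C_differentiable (fun x => f (g x)) z.
Proof.
  intros [l Hg] Hf.
  apply (ex_derive_comp (K := C_AbsRing) (V := C_NormedModule) f g z Hf).
  exists l. apply is_derive_AbsRing_of_C, Hg.
Qed.

Lemma C_differentiable_cexp (z : C) : C_differentiable cexp z.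
Proof. exists (cexp z). apply is_derive_cexp. Qed.

Lemma C_differentiable_cexp_opp (z : C) : C_differentiable (fun x => cexp (- x)) z.
Proof.
  apply C_differentiable_comp; [|apply C_differentiable_cexp].
  destruct (ex_derive_opp (K := C_AbsRing) (V := AbsRing_NormedModule C_AbsRing)
              (fun x => x) z (ex_derive_id z)) as [l Hl].
  exists l. apply is_derive_C_of_AbsRing, Hl.
Qed.

Lemma C_differentiable_csinh (z : C) : C_differentiable csinh z.
Proof.
  apply C_differentiable_mult; [|apply C_differentiable_const].
  apply (ex_derive_minus (K := C_AbsRing) (V := C_NormedModule));
    [apply C_differentiable_cexp | apply C_differentiable_cexp_opp].
Qed.

Lemma C_differentiable_ccosh (z : C) : C_differentiable ccosh z.
Proof.
  apply C_differentiable_mult; [|apply C_differentiable_const].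
  apply (ex_derive_plus (K := C_AbsRing) (V := C_NormedModule));
    [apply C_differentiable_cexp | apply C_differentiable_cexp_opp].
Qed.

Lemma csinh_sq_add_1 (z : C) : (1 + csinh z * csinh z)%C = (ccosh z * ccosh z)%C.
Proof. unfold csinh, ccosh. rewrite <- (cexp_mul_cexp_opp z) at 1. field. Qed.

Lemma cexp_double (z : C) : cexp (2 * z) = (cexp z * cexp z)%C.
Proof. rewrite <- cexp_add. f_equal. ring. Qed.

Lemma cexp_double_opp (z : C) : cexp (-2 * z) = (cexp (- z) * cexp (- z))%C.
Proof. rewrite <- cexp_add. f_equal. ring. Qed.

Lemma ccosh_sq_mul_4 (z : C) :
  (ccosh z * ccosh z * 4)%C = ((1 + cexp (-2 * z)) * (1 + cexp (2 * z)))%C.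
Proof.
  rewrite cexp_double_opp, cexp_double. unfold ccosh.
  pose proof (cexp_mul_cexp_opp z) as Hinv.
  set (u := cexp z) in *. set (v := cexp (- z)) in *.
  transitivity (u * u + v * v + 2 * (u * v))%C; [field|].
  transitivity (1 + v * v + u * u + (u * v) * (u * v))%C; [|ring].
  rewrite Hinv. ring.
Qed.

Lemma Cmod_ccosh_sq_mul_4 (z : C) :
  Cmod (ccosh z) * Cmod (ccosh z) * 4 =
  Cmod (1 + cexp (-2 * z)) * Cmod (1 + cexp (2 * z)).
Proof.
  rewrite <- !Cmod_mult, <- ccosh_sq_mul_4, !Cmod_mult, Cmod_R, Rabs_right; lra.
Qed.

Lemma Cmod_1_add_cexp_double_le (w : C) :
  Cmod (1 + cexp (2 * w)) <= 1 + exp (2 * Re w).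
Proof.
  eapply Rle_trans; [apply Cmod_triangle|].
  rewrite Cmod_1, Cmod_cexp. destruct w as [x y]; simpl. right. f_equal. f_equal. ring.
Qed.

(* Rotating by [exp (- i Im w)] turns [1 + cexp (2 w)] into a number with real part
   [cos (Im w) * (1 + exp (2 Re w))]. *)
Lemma cos_Im_le_Cmod_1_add_cexp_double (w : C) :
  cos (Im w) <= Cmod (1 + cexp (2 * w)).
Proof.
  destruct w as [x y]; simpl.
  set (u := cexp (0, - y)).
  assert (Hu : Cmod u = 1) by (unfold u; rewrite Cmod_cexp; apply exp_0).
  assert (Hrot : (u * (1 + cexp (2 * (x, y))))%C = (u + cexp ((2 * x)%R, y))%C).
  { unfold u. rewrite Cmult_plus_distr_l, Cmult_1_r, <- cexp_add. do 2 f_equal.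
    unfold Cmult, Cplus; simpl. f_equal; ring. }
  replace (Cmod (1 + cexp (2 * (x, y)))) with (Cmod (u * (1 + cexp (2 * (x, y)))))
    by (rewrite Cmod_mult, Hu; ring).
  rewrite Hrot.
  eapply Rle_trans; [|apply re_le_Cmod].
  unfold u, cexp; simpl. rewrite exp_0, cos_neg.
  replace (1 * cos y + exp (2 * x) * cos y) with (cos y * (1 + exp (2 * x))) by ring.
  pose proof (exp_pos (2 * x)). pose proof (Rle_abs (cos y)). pose proof (Rabs_pos (cos y)).
  rewrite Rabs_mult, (Rabs_right (1 + _)) by lra. nra.
Qed.

Lemma Rpower_sq_mul_factor (p A B M : R) :
  0 < A -> 0 < B -> 0 < M -> M * M * 4 = A * B ->
  Rpower (M * M) (- (p + 1) / 2) * M =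
  Rpower 2 p * Rpower A (- p / 2) * Rpower B (- p / 2).
Proof.
  intros HA HB HM HMAB.
  assert (Hln : ln A + ln B = 2 * ln M + 2 * ln 2).
  { rewrite <- ln_mult, <- HMAB, !ln_mult by nra.
    replace 4 with (2 * 2) by ring. rewrite ln_mult by lra. ring. }
  unfold Rpower. rewrite <- (exp_ln M) at 3 by exact HM.
  rewrite <- !exp_plus, ln_mult by exact HM. f_equal. nra.
Qed.

(* For p <= q the surplus power of B is absorbed by B <= 2, for q < p by c <= B. *)
Lemma Rpower_weight_shift (p q c B : R) :
  0 < c <= 1 -> c <= B <= 2 ->
  Rpower 2 p * Rpower B (- p / 2) <=
  Rpower 2 (Rmax p q) / Rpower c ((Rmax p q - Rmin p q) / 2) * Rpower B (- q / 2).
Proof.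
  intros Hc HB.
  assert (Hln2 : 0 < ln 2) by (rewrite <- ln_1; apply ln_increasing; lra).
  assert (Hlnc : ln c <= 0) by (rewrite <- ln_1; apply ln_le; lra).
  assert (HlncB : ln c <= ln B) by (apply ln_le; lra).
  assert (HlnB2 : ln B <= ln 2) by (apply ln_le; lra).
  unfold Rdiv, Rpower. rewrite <- exp_Ropp, <- !exp_plus.
  apply exp_le_compat.
  destruct (Rle_dec p q) as [Hpq|Hqp].
  - rewrite Rmax_right, Rmin_left by lra. nra.
  - rewrite Rmax_left, Rmin_right by lra. nra.
Qed.

Lemma cosh_weight_le (K p q c A B M : R) :
  0 <= K -> 0 < c <= 1 -> c <= B <= 2 -> 0 < A -> 0 < M -> M * M * 4 = A * B ->
  K * Rpower (M * M) (- (p + 1) / 2) * M <=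
  Rpower 2 (Rmax p q) * K / Rpower c ((Rmax p q - Rmin p q) / 2)
    * Rpower A (- p / 2) * Rpower B (- q / 2).
Proof.
  intros HK Hc HB HA HM HMAB.
  rewrite Rmult_assoc, (Rpower_sq_mul_factor p A B M) by (auto; lra).
  pose proof (Rpower_weight_shift p q c B Hc HB) as Hshift.
  assert (HKA : 0 <= K * Rpower A (- p / 2)).
  { apply Rmult_le_pos; [exact HK|]. left; apply exp_pos. }
  pose proof (Rmult_le_compat_l _ _ _ HKA Hshift) as Hscaled.
  unfold Rdiv in *.
  eapply Rle_trans; [right|eapply Rle_trans; [exact Hscaled|right]]; ring.
Qed.

Lemma Cmod_1_add_cexp_double_opp (z : C) :
  Cmod (1 + cexp (-2 * z)) = Cmod (1 + cexp (2 * - z)).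
Proof. do 3 f_equal. ring. Qed.

Lemma Cmod_1_add_cexp_double_le_2 (w : C) : Re w <= 0 -> Cmod (1 + cexp (2 * w)) <= 2.
Proof.
  intros Hw. eapply Rle_trans; [apply Cmod_1_add_cexp_double_le|].
  pose proof (exp_le_compat (2 * Re w) 0 ltac:(lra)) as Hexp. rewrite exp_0 in Hexp. lra.
Qed.

Lemma Cmod_csinh_mul_ccosh_le (d : R) (f : C -> C) (K alpha beta c : R) (zeta : C) :
  0 <= K ->
  (forall zeta, strip_minus d zeta ->
     Cmod (f (csinh zeta)) <=
       K * Rpower (Cmod (1 + csinh zeta * csinh zeta)) (- (alpha + 1) / 2)) ->
  (forall zeta, strip_plus d zeta ->
     Cmod (f (csinh zeta)) <=
       K * Rpower (Cmod (1 + csinh zeta * csinh zeta)) (- (beta + 1) / 2)) ->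
  strip d zeta -> 0 < c <= 1 -> c <= cos (Im zeta) ->
  Cmod (f (csinh zeta) * ccosh zeta) <=
    Rpower 2 (Rmax alpha beta) * K / Rpower c ((Rmax alpha beta - Rmin alpha beta) / 2)
      * Rpower (Cmod (1 + cexp (-2 * zeta))) (- alpha / 2)
      * Rpower (Cmod (1 + cexp (2 * zeta))) (- beta / 2).
Proof.
  intros HK Hminus Hplus Hstrip Hc Hcos.
  rewrite Cmod_1_add_cexp_double_opp.
  set (A := Cmod (1 + cexp (2 * - zeta))).
  set (B := Cmod (1 + cexp (2 * zeta))).
  set (M := Cmod (ccosh zeta)).
  assert (HMAB : M * M * 4 = A * B)
    by (unfold M, A, B; rewrite <- Cmod_1_add_cexp_double_opp; apply Cmod_ccosh_sq_mul_4).
  assert (HcB : c <= B) by (eapply Rle_trans; [exact Hcos|apply cos_Im_le_Cmod_1_add_cexp_double]).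
  assert (HcA : c <= A).
  { eapply Rle_trans; [|apply cos_Im_le_Cmod_1_add_cexp_double].
    destruct zeta as [x y]; simpl. rewrite cos_neg. exact Hcos. }
  assert (HM : 0 < M).
  { destruct (Cmod_ge_0 (ccosh zeta)) as [Hpos|Hzero]; [exact Hpos|].
    fold M in Hzero. rewrite <- Hzero in HMAB. nra. }
  assert (Hsinh : Cmod (1 + csinh zeta * csinh zeta) = M * M)
    by (rewrite csinh_sq_add_1, Cmod_mult; reflexivity).
  rewrite Cmod_mult. fold M.
  destruct (Rlt_or_le (Re zeta) 0) as [Hre|Hre].
  - pose proof (Hminus zeta (conj Hstrip Hre)) as Hfz. rewrite Hsinh in Hfz.
    eapply Rle_trans; [apply Rmult_le_compat_r; [lra|exact Hfz]|].
    apply cosh_weight_le; try lra.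
    split; [exact HcB|]. apply Cmod_1_add_cexp_double_le_2. lra.
  - pose proof (Hplus zeta (conj Hstrip Hre)) as Hfz. rewrite Hsinh in Hfz.
    eapply Rle_trans; [apply Rmult_le_compat_r; [lra|exact Hfz]|].
    eapply Rle_trans; [apply (cosh_weight_le K beta alpha c B A M); try lra|].
    + split; [exact HcA|]. apply Cmod_1_add_cexp_double_le_2.
      destruct zeta as [x y]; simpl in *; lra.
    + rewrite Rmax_comm, Rmin_comm. right. ring.
Qed.

Lemma cos_le_cos_Im_strip (d : R) (zeta : C) :
  d < PI / 2 -> strip d zeta -> cos d <= cos (Im zeta).
Proof.
  unfold strip. intros Hd Hz. pose proof PI_RGT_0.
  destruct (Rle_or_lt 0 (Im zeta)) as [Hy|Hy].
  - rewrite Rabs_right in Hz by lra. left; apply cos_decreasing_1; lra.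
  - rewrite Rabs_left in Hz by lra. rewrite <- (cos_neg (Im zeta)).
    left; apply cos_decreasing_1; lra.
Qed.

Lemma Cmod_1_add_cexp_R (x : R) : Cmod (1 + cexp (RtoC x)) = 1 + exp x.
Proof.
  rewrite cexp_R, <- RtoC_plus, Cmod_R, Rabs_right; [reflexivity|].
  pose proof (exp_pos x). lra.
Qed.

Lemma Rpower_1_base (t : R) : Rpower 1 t = 1.
Proof. unfold Rpower. rewrite ln_1, Rmult_0_r. apply exp_0. Qed.

Theorem lemma1 (d : R) (f : C -> C) (K alpha beta : R) :
  0 < d -> d < PI / 2 ->
  (forall z, (exists zeta, strip d zeta /\ z = csinh zeta) -> C_differentiable f z) ->
  0 < K -> 0 < alpha -> 0 < beta ->
  (forall zeta, strip_minus d zeta ->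
     Cmod (f (csinh zeta)) <=
       K * Rpower (Cmod (1 + csinh zeta * csinh zeta)) (- (alpha + 1) / 2)) ->
  (forall zeta, strip_plus d zeta ->
     Cmod (f (csinh zeta)) <=
       K * Rpower (Cmod (1 + csinh zeta * csinh zeta)) (- (beta + 1) / 2)) ->
  LSE (Rpower 2 (Rmax alpha beta) * K
         / Rpower (cos d) ((Rmax alpha beta - Rmin alpha beta) / 2))
      (Rpower 2 (Rmax alpha beta) * K)
      alpha beta d (fun zeta => (f (csinh zeta) * ccosh zeta)%C).
Proof.
  intros Hd0 Hd1 Hf HK _ _ Hminus Hplus.
  assert (Hcosd : 0 < cos d <= 1)
    by (split; [apply cos_gt_0|destruct (COS_bound d)]; lra).
  split; [|split].
  - intros zeta Hz. apply C_differentiable_mult; [|apply C_differentiable_ccosh].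
    apply C_differentiable_comp; [apply C_differentiable_csinh|].
    apply Hf. exists zeta. split; [exact Hz|reflexivity].
  - intros zeta Hz. apply (Cmod_csinh_mul_ccosh_le d); try lra; try assumption.
    apply cos_le_cos_Im_strip; assumption.
  - intros x.
    assert (Hx : strip d (RtoC x)) by (unfold strip; simpl; rewrite Rabs_R0; exact Hd0).
    pose proof (Cmod_csinh_mul_ccosh_le d f K alpha beta 1 x ltac:(lra) Hminus Hplus Hx
                  ltac:(lra) ltac:(simpl; rewrite cos_0; lra)) as Hbound.
    rewrite Rpower_1_base, Rdiv_1_r, <- !RtoC_mult, !Cmod_1_add_cexp_R in Hbound.
    exact Hbound.
Qed.
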